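(* Let $\|\cdot\|$ be a norm on $\mathbb{R}^d$ with dual norm $\|z\|_*=\max_{\|u\|\le1}\langle u,z\rangle$, let $\Phi$ be a mirror map whose Bregman divergence satisfies $\frac{m}{2}\|x-y\|^2\le D_\Phi(x,y)\le\frac{M}{2}\|x-y\|^2$ for constants $0<m\le M$, and let $f_t$ be a convex function on the convex set $\mathcal{X}$, with $\Phi$ and $f_t$ continuously differentiable on $\mathcal{X}$. Fix a point $x_{t-1}$ and, for $K_l=\{x: f_t(x)\le l\}$, let $x(l)=\Pi^\Phi_{K_l}(x_{t-1})$. Then the function $$h(l)=\frac{\|\nabla\Phi(x_{t-1})-\nabla\Phi(x(l))\|_*}{\|\nabla f_t(x(l))\|_*}$$ is continuous in $l$.
   Context: For a convex function $\Phi$, the Bregman divergence is $D_\Phi(x,y)=\Phi(x)-\Phi(y)-\nabla\Phi(y)^T(x-y)$, and the Bregman projection of $x$ onto a convex set $K$ is $\Pi^\Phi_K(x)=\arg\min_{y\in K}D_\Phi(y,x)$. *)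

From HB Require Import structures.
From mathcomp Require Import all_boot all_order all_algebra.
From mathcomp Require Import all_classical all_reals all_analysis.
Set Implicit Arguments. Unset Strict Implicit. Unset Printing Implicit Defensive.
Import Order.TTheory GRing.Theory Num.Theory.
Import numFieldNormedType.Exports.
Local Open Scope classical_set_scope.
Local Open Scope ring_scope.

Definition dotp (R : realType) (d : nat) (u v : 'rV[R]_d) : R :=
  \sum_(i < d) u ord0 i * v ord0 i.

Definition is_norm (R : realType) (d : nat) (N : 'rV[R]_d -> R) : Prop :=
  [/\ forall x, N x = 0 -> x = 0,
      forall (a : R) x, N (a *: x) = `|a| * N x
    & forall x y, N (x + y) <= N x + N y].

Definition dual_norm (R : realType) (d : nat) (N : 'rV[R]_d -> R) (z : 'rV[R]_d) : R :=
  sup [set dotp u z | u in [set u : 'rV[R]_d | N u <= 1]].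

Definition is_gradient (R : realType) (d : nat) (F : 'rV[R]_d -> R)
  (x g : 'rV[R]_d) : Prop :=
  differentiable F x /\ forall v, 'd F x v = dotp g v.

Definition C1_on (R : realType) (d : nat) (X : set 'rV[R]_d)
  (F : 'rV[R]_d -> R) (gF : 'rV[R]_d -> 'rV[R]_d) : Prop :=
  (forall x, X x -> is_gradient F x (gF x)) /\ {within X, continuous gF}.

Definition convex_set_of (R : realType) (d : nat) (X : set 'rV[R]_d) : Prop :=
  forall x y (t : R), X x -> X y -> 0 <= t <= 1 -> X ((1 - t) *: x + t *: y).

Definition convex_fun_on (R : realType) (d : nat) (X : set 'rV[R]_d)
  (f : 'rV[R]_d -> R) : Prop :=
  forall x y (t : R), X x -> X y -> 0 <= t <= 1 ->
    f ((1 - t) *: x + t *: y) <= (1 - t) * f x + t * f y.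

Definition bregman (R : realType) (d : nat) (Phi : 'rV[R]_d -> R)
  (gPhi : 'rV[R]_d -> 'rV[R]_d) (x y : 'rV[R]_d) : R :=
  Phi x - Phi y - dotp (gPhi y) (x - y).

Definition is_bregman_proj (R : realType) (d : nat) (Phi : 'rV[R]_d -> R)
  (gPhi : 'rV[R]_d -> 'rV[R]_d) (K : set 'rV[R]_d) (x p : 'rV[R]_d) : Prop :=
  K p /\ forall y, K y -> bregman Phi gPhi p x <= bregman Phi gPhi y x.

Definition sublevel (R : realType) (d : nat) (X : set 'rV[R]_d)
  (f : 'rV[R]_d -> R) (l : R) : set 'rV[R]_d :=
  [set x | X x /\ f x <= l].

(* Let V(l) = D_Phi(x(l), x_{t-1}) be the optimal value. The lower Bregman bound
   makes D_Phi(., x_{t-1}) m-strongly convex, so comparing x(l) with the midpoint of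
   x(l) and x(l') gives m/4 ||x(l) - x(l')||^2 <= V(l) - V(l') for l <= l': x(l) is
   continuous wherever V is. V is nonincreasing and, f_t being convex, convex in l,
   which gives continuity from the left. Continuity from the right is a compactness
   argument: if V(l') <= V(l) - eta for l' > l arbitrarily close to l, a cluster point
   of these x(l') (they stay in a compact sublevel set of D_Phi(., x_{t-1})) lies in
   K_l and beats x(l). Finally the gradients are continuous, the dual norm is
   Lipschitz and the denominator never vanishes. *)

From HB Require Import structures.
From mathcomp Require Import all_boot all_order all_algebra.
From mathcomp Require Import all_classical all_reals all_analysis.
From mathcomp Require Import ring lra.
Import Order.TTheory GRing.Theory Num.Theory.
Import numFieldNormedType.Exports.
Local Open Scope classical_set_scope.
Local Open Scope ring_scope.

Lemma lipschitz_continuous (R : realFieldType) (U V : normedModType R)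
    (g : U -> V) (k : R) :
  (forall a b, `|g a - g b| <= k * `|a - b|) -> continuous g.
Proof.
move=> gk x; apply/cvgrPdist_lt => e e0.
have k1 : 0 < `|k| + 1 by rewrite ltr_wpDl.
have : \forall y \near x, `|x - y| < e / (`|k| + 1).
  by apply: cvgr_dist_lt => //; rewrite divr_gt0.
apply: filterS => y xy; apply: le_lt_trans (gk _ _) _.
rewrite ltr_pdivlMr // in xy.
have := normr_ge0 (x - y); have := ler_norm k; nra.
Qed.

Section Dotp.
Context {R : realType} {d : nat}.
Implicit Types (u v w : 'rV[R]_d).

Lemma dotpDr u v w : dotp u (v + w) = dotp u v + dotp u w.
Proof. by rewrite /dotp -big_split; apply: eq_bigr => i _; rewrite mxE mulrDr. Qed.

Lemma dotpZr a u v : dotp u (a *: v) = a * dotp u v.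
Proof. by rewrite /dotp mulr_sumr; apply: eq_bigr => i _; rewrite mxE mulrCA. Qed.

Lemma dotpZl a u v : dotp (a *: u) v = a * dotp u v.
Proof. by rewrite /dotp mulr_sumr; apply: eq_bigr => i _; rewrite mxE mulrA. Qed.

Lemma dotpNr u v : dotp u (- v) = - dotp u v.
Proof. by rewrite -scaleN1r dotpZr mulN1r. Qed.

Lemma dotpBr u v w : dotp u (v - w) = dotp u v - dotp u w.
Proof. by rewrite dotpDr dotpNr. Qed.

Lemma normr_coord_le u i : `|u ord0 i| <= `|u|.
Proof.
rewrite [leRHS]/Num.Def.normr /= mx_normrE.
exact: le_trans (le_bigmax _ _ (ord0, i)).
Qed.

Lemma norm_dotp_le u v : `|dotp u v| <= d%:R * `|u| * `|v|.
Proof.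
rewrite /dotp -mulrA; apply: le_trans (ler_norm_sum _ _ _) _.
apply: le_trans (_ : \sum_(i < d) `|u| * `|v| <= _).
  by apply: ler_sum => i _; rewrite normrM ler_pM ?normr_coord_le.
by rewrite sumr_const card_ord mulr_natl.
Qed.

Lemma dotpp_gt0 u : u != 0 -> 0 < dotp u u.
Proof.
move=> u0; have [i ui] : exists i, u ord0 i != 0.
  apply/existsP; apply: contraR u0 => /existsPn u0.
  by apply/eqP/rowP => i; rewrite mxE; apply/eqP; rewrite -[_ == _]negbK u0.
rewrite /dotp (bigD1 i) //=; apply: ltr_pwDl; first by rewrite -expr2 exprn_even_gt0.
by apply: sumr_ge0 => j _; rewrite -expr2 sqr_ge0.
Qed.

Lemma dotp_continuous u : continuous (dotp u).
Proof.
apply: (@lipschitz_continuous _ _ _ _ (d%:R * `|u|)) => a b.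
by rewrite -dotpBr norm_dotp_le.
Qed.

End Dotp.

Lemma normr_bounded_set (R : realType) (d : nat) (A : set 'rV[R]_d) (r : R) :
  (forall z, A z -> `|z| <= r) -> bounded_set A.
Proof.
move=> Ar; exists r; split; first exact: num_real.
by move=> M rM z /Ar zr; exact/ltW/(le_lt_trans zr).
Qed.

Section IsNorm.
Context {R : realType} {d : nat} {N : 'rV[R]_d -> R}.
Hypothesis hN : is_norm N.
Implicit Types (u v : 'rV[R]_d).

Lemma is_normZ a u : N (a *: u) = `|a| * N u.
Proof. by case: hN. Qed.

Lemma is_norm_triangle u v : N (u + v) <= N u + N v.
Proof. by case: hN. Qed.

Lemma is_norm0 : N 0 = 0.
Proof. by rewrite -(scale0r (0 : 'rV[R]_d)) is_normZ normr0 mul0r. Qed.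

Lemma is_normN u : N (- u) = N u.
Proof. by rewrite -scaleN1r is_normZ normrN1 mul1r. Qed.

Lemma is_norm_ge0 u : 0 <= N u.
Proof.
have := is_norm_triangle u (- u); rewrite subrr is_norm0 is_normN; lra.
Qed.

Lemma is_norm_gt0 u : u != 0 -> 0 < N u.
Proof.
move=> u0; rewrite lt_neqAle is_norm_ge0 andbT eq_sym.
by apply: contra u0 => /eqP; case: hN => + _ _ => /[apply] ->.
Qed.

Lemma is_norm_dist u v : `|N u - N v| <= N (u - v).
Proof.
have := is_norm_triangle (u - v) v; have := is_norm_triangle (v - u) u.
rewrite !subrK -[v - u]opprB is_normN ler_norml => h1 h2.
by apply/andP; split; lra.
Qed.

Lemma is_norm_le_normr : exists2 C, 0 <= C & forall u, N u <= C * `|u|.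
Proof.
exists (\sum_(j < d) N (delta_mx 0 j)).
  by apply: sumr_ge0 => j _; exact: is_norm_ge0.
move=> u; rewrite {1}(row_sum_delta u) mulr_suml.
have N_sum (F : 'I_d -> 'rV[R]_d) : N (\sum_j F j) <= \sum_j N (F j).
  elim/big_ind2 : _ => [|a b a' b' ha hb|//]; first by rewrite is_norm0.
  exact: le_trans (is_norm_triangle _ _) (lerD ha hb).
apply: le_trans (N_sum _) _; apply: ler_sum => j _.
by rewrite is_normZ mulrC ler_wpM2l ?is_norm_ge0 ?normr_coord_le.
Qed.

Lemma is_norm_continuous : continuous N.
Proof.
have [C _ NC] := is_norm_le_normr.
apply: (@lipschitz_continuous _ _ _ _ C) => u v.
exact: le_trans (is_norm_dist u v) (NC _).
Qed.

Lemma is_norm_ge_normr : exists2 c, 0 < c & forall u, c * `|u| <= N u.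
Proof.
have [[v v0]|] := pselect (exists v : 'rV[R]_d, v != 0); last first.
  move=> all0; exists 1 => // u; have -> : u = 0.
    by apply: contrapT => /eqP u0; apply: all0; exists u.
  by rewrite normr0 mulr0 is_norm0.
pose S := [set u : 'rV[R]_d | `|u| = 1].
have unitS u : u != 0 -> S (`|u|^-1 *: u).
  move=> u0; rewrite /S /= normrZ normrV ?unitfE ?normr_eq0 //.
  by rewrite normr_id mulVf ?normr_eq0.
have cS : compact S.
  apply: bounded_closed_compact; first by apply: (@normr_bounded_set _ _ _ 1) => u ->.
  exact: (continuous_closedP _).1 (@norm_continuous _ ('rV[R]_d)) _ (@closed_eq R 1).
have [c /set_mem Sc minc] := EVT_min_rV (ex_intro _ _ (unitS v v0)) cS
  (continuous_subspaceT is_norm_continuous).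
have c0 : c != 0.
  by apply/eqP => c0; move: Sc; rewrite /S /= c0 normr0 => /esym/eqP; rewrite oner_eq0.
exists (N c); first exact: is_norm_gt0.
move=> u; have [->|u0] := eqVneq u 0; first by rewrite normr0 mulr0 is_norm0.
have := minc _ (mem_set (unitS u u0)).
rewrite is_normZ normrV ?unitfE ?normr_eq0 // normr_id.
by rewrite ler_pdivlMl ?normr_gt0 // mulrC.
Qed.

Let dual_set z := [set dotp u z | u in [set u | N u <= 1]].

Lemma dual_set_le : exists2 K, 0 <= K & forall u z, N u <= 1 -> dotp u z <= K * `|z|.
Proof.
have [c c0 cN] := is_norm_ge_normr.
exists (d%:R / c); first exact: divr_ge0 (ler0n _ _) (ltW c0).
move=> u z Nu.
apply: le_trans (ler_norm _) _; apply: le_trans (norm_dotp_le _ _) _.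
apply: ler_wpM2r => //; apply: ler_wpM2l => //.
by rewrite -(ler_pM2l c0) mulfV ?gt_eqF //; exact: le_trans (cN u) Nu.
Qed.

Lemma has_sup_dual_set z : has_sup (dual_set z).
Proof.
split; first by exists (dotp 0 z), 0; rewrite //= is_norm0.
by have [K _ dK] := dual_set_le; exists (K * `|z|) => _ [u Nu <-]; exact: dK.
Qed.

Lemma dual_norm_ub z u : N u <= 1 -> dotp u z <= dual_norm N z.
Proof. by move=> Nu; apply: sup_upper_bound (has_sup_dual_set z) _ _; exists u. Qed.

Lemma dual_norm_gt0 z : z != 0 -> 0 < dual_norm N z.
Proof.
move=> z0; have Nz := is_norm_gt0 _ z0.
have Nz1 : N ((N z)^-1 *: z) <= 1.
  by rewrite is_normZ gtr0_norm ?invr_gt0 // mulVf ?gt_eqF.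
apply: lt_le_trans (dual_norm_ub _ _ Nz1).
by rewrite dotpZl mulr_gt0 ?invr_gt0 ?dotpp_gt0.
Qed.

Lemma dual_norm_continuous : continuous (dual_norm N).
Proof.
have [K _ dK] := dual_set_le.
have dual_le z w : dual_norm N z <= dual_norm N w + K * `|z - w|.
  apply: sup_le_ub; first by case: (has_sup_dual_set z).
  move=> _ [u Nu <-].
  have -> : dotp u z = dotp u w + dotp u (z - w) by rewrite -dotpDr addrC subrK.
  by apply: lerD; [exact: dual_norm_ub | exact: dK].
apply: (@lipschitz_continuous _ _ _ _ K) => z w.
by rewrite ler_norml; have := dual_le w z; rewrite distrC; have := dual_le z w; lra.
Qed.

End IsNorm.

Lemma closed_sublevel {R : realType} {d : nat} {X : set 'rV[R]_d}
    {g : 'rV[R]_d -> R} {c : R} :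
  closed X -> (forall z, X z -> {for z, continuous g}) -> closed (sublevel X g c).
Proof.
move=> cX cg p clp.
have Xp : X p by apply: cX => B /clp [z [[Xz _] Bz]]; exists z.
split=> //; rewrite leNgt; apply/negP => gpc.
have /cvgrPdist_lt/(_ (g p - c)) := cg p Xp; rewrite subr_gt0 => /(_ gpc) /clp.
by case=> z [[_ gzc] /=]; have := ler_norm (g p - g z); lra.
Qed.

Lemma closed_cluster {T : topologicalType} {F : set_system T} {A : set T} :
  closed A -> F A -> cluster F `<=` A.
Proof. by move=> /closure_id cA FA p; rewrite clusterE cA => /(_ A FA). Qed.

Lemma within_continuous_comp_within {U V W : topologicalType}
    {A : set U} {B : set V} {f : U -> V} {g : V -> W} :
  {within A, continuous f} -> {within B, continuous g} -> (forall x, A x -> B (f x)) ->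
  {within A, continuous (g \o f)}.
Proof.
move=> /subspace_continuousP cf /subspace_continuousP cg AB.
apply/subspace_continuousP => x Ax; apply: cvg_trans (cg _ (AB _ Ax)).
move=> C /(cf _ Ax) BC; apply: filterS2 (withinT A (nbhs_filter x)) BC.
by move=> y Ay /(_ (AB _ Ay)).
Qed.

Lemma bregman_convex_comb (R : realType) (d : nat) (Phi : 'rV[R]_d -> R)
    (gPhi : 'rV[R]_d -> 'rV[R]_d) (x0 y z : 'rV[R]_d) (t : R) :
  let w := (1 - t) *: y + t *: z in
  (1 - t) * bregman Phi gPhi y x0 + t * bregman Phi gPhi z x0 - bregman Phi gPhi w x0 =
  (1 - t) * bregman Phi gPhi y w + t * bregman Phi gPhi z w.
Proof.
move=> w; rewrite /bregman.
have comb_x0 : dotp (gPhi x0) (w - x0) =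
    (1 - t) * dotp (gPhi x0) (y - x0) + t * dotp (gPhi x0) (z - x0).
  by rewrite -!dotpZr -dotpDr; congr dotp; apply/rowP => i; rewrite !mxE; ring.
have comb_w : (1 - t) * dotp (gPhi w) (y - w) + t * dotp (gPhi w) (z - w) = 0.
  rewrite -!dotpZr -dotpDr (_ : _ + _ = 0); last by apply/rowP => i; rewrite !mxE; ring.
  by rewrite /dotp big1 // => i _; rewrite mxE mulr0.
by rewrite comb_x0; lra.
Qed.

Lemma sublevel_convex_comb {R : realType} {d : nat} {X : set 'rV[R]_d}
    {f : 'rV[R]_d -> R} {a b t : R} {y z : 'rV[R]_d} :
  convex_set_of X -> convex_fun_on X f -> 0 <= t <= 1 ->
  sublevel X f a y -> sublevel X f b z ->
  sublevel X f ((1 - t) * a + t * b) ((1 - t) *: y + t *: z).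
Proof.
move=> cvX cvf t01 [Xy fy] [Xz fz]; split; first exact: cvX.
apply: le_trans (cvf _ _ _ Xy Xz t01) _.
by case/andP: t01 => t0 t1; apply: lerD; apply: ler_wpM2l; rewrite ?subr_ge0.
Qed.

Section BregmanDivergence.
Context {R : realType} {d : nat} {N : 'rV[R]_d -> R} {X : set 'rV[R]_d}
  {Phi : 'rV[R]_d -> R} {gPhi : 'rV[R]_d -> 'rV[R]_d} {m : R} {x0 : 'rV[R]_d}.
Hypotheses (hN : is_norm N) (cvX : convex_set_of X) (m0 : 0 < m)
  (bregman_ge : forall x y, X x -> X y -> m / 2 * N (x - y) ^+ 2 <= bregman Phi gPhi x y).

Local Notation D y := (bregman Phi gPhi y x0).

Lemma bregman_strongly_convex {y z t} : X y -> X z -> 0 <= t <= 1 ->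
  m / 2 * (t * (1 - t)) * N (y - z) ^+ 2 <=
    (1 - t) * D y + t * D z - D ((1 - t) *: y + t *: z).
Proof.
move=> Xy Xz t01; rewrite bregman_convex_comb.
set w := (1 - t) *: y + t *: z; have Xw : X w by exact: cvX.
have [t0 t1] : 0 <= t /\ 0 <= 1 - t by case/andP: t01; rewrite subr_ge0.
have := ler_wpM2l t1 (bregman_ge _ _ Xy Xw); have := ler_wpM2l t0 (bregman_ge _ _ Xz Xw).
have -> : y - w = t *: (y - z) by apply/rowP => i; rewrite !mxE; ring.
have -> : z - w = - ((1 - t) *: (y - z)) by apply/rowP => i; rewrite !mxE; ring.
rewrite is_normN // !is_normZ // !ger0_norm //.
set n := N (y - z); nra.
Qed.

Lemma bregman_convex {y z t} : X y -> X z -> 0 <= t <= 1 ->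
  D ((1 - t) *: y + t *: z) <= (1 - t) * D y + t * D z.
Proof.
move=> Xy Xz t01; have := bregman_strongly_convex Xy Xz t01.
have : 0 <= m / 2 * (t * (1 - t)) * N (y - z) ^+ 2.
  case/andP: t01 => t0 t1.
  by rewrite !mulr_ge0 ?exprn_ge0 ?(is_norm_ge0 hN) ?subr_ge0 // ltW.
lra.
Qed.

Lemma bregman_proj_sq_le {K q y} : K `<=` X -> convex_set_of K ->
  is_bregman_proj Phi gPhi K x0 q -> K y -> m / 4 * N (y - q) ^+ 2 <= D y - D q.
Proof.
move=> KX cvK [Kq qmin] Ky.
have half01 : 0 <= (2^-1 : R) <= 1 by rewrite invr_ge0 ler0n invf_le1 ?ler1n.
have := qmin _ (cvK _ _ _ Ky Kq half01).
have := bregman_strongly_convex (KX _ Ky) (KX _ Kq) half01.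
lra.
Qed.

Lemma bregman_continuous z : {for z, continuous Phi} ->
  {for z, continuous (fun y => D y)}.
Proof.
move=> cPhi.
have cdot : (fun y => dotp (gPhi x0) (y - x0)) @ z --> dotp (gPhi x0) (z - x0).
  exact: continuous_cvg (dotp_continuous _ _) (cvgB cvg_id (cvg_cst _)).
exact: cvgB (cvgB cPhi (cvg_cst _)) cdot.
Qed.

Lemma bregman_sublevel_bounded c : X x0 -> bounded_set (sublevel X (fun y => D y) c).
Proof.
move=> X0; have [k k0 kN] := is_norm_ge_normr hN.
pose r := 2 * c / (m * k ^+ 2).
apply: (@normr_bounded_set _ _ _ (`|x0| + (r + 1))) => y [Xy Dy].
rewrite -[y](subrK x0) addrC; apply: le_trans (ler_normD _ _) _; rewrite lerD2l.
have mk : 0 < m * k ^+ 2 by rewrite mulr_gt0 ?exprn_gt0.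
have := bregman_ge _ _ Xy X0; have := kN (y - x0); have := is_norm_ge0 hN (y - x0).
set s := `|y - x0|; set n := N (y - x0); move=> n0 ksn mn.
have s0 : 0 <= s := normr_ge0 _.
have ks2 : (k * s) ^+ 2 <= n ^+ 2.
  by apply: lerXn2r; rewrite // nnegrE // mulr_ge0 // ltW.
have sr : s ^+ 2 <= r.
  rewrite /r ler_pdivlMr //; rewrite exprMn in ks2.
  have := ler_wpM2l (ltW m0) ks2; lra.
nra.
Qed.

End BregmanDivergence.

Section ProjectionPath.
Context {R : realType} {d : nat} {N : 'rV[R]_d -> R} {X : set 'rV[R]_d}
  {Phi f : 'rV[R]_d -> R} {gPhi : 'rV[R]_d -> 'rV[R]_d} {m : R}
  {x0 : 'rV[R]_d} {xl : R -> 'rV[R]_d} {I : set R}.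
Hypotheses (hN : is_norm N) (cvX : convex_set_of X) (clX : closed X)
  (cPhi : forall z, X z -> {for z, continuous Phi})
  (cf : forall z, X z -> {for z, continuous f})
  (cvf : convex_fun_on X f) (m0 : 0 < m)
  (bregman_ge : forall x y, X x -> X y -> m / 2 * N (x - y) ^+ 2 <= bregman Phi gPhi x y)
  (X0 : X x0)
  (xl_proj : forall l, I l -> is_bregman_proj Phi gPhi (sublevel X f l) x0 (xl l)).

Local Notation D y := (bregman Phi gPhi y x0).
Local Notation V l := (D (xl l)).

Lemma proj_sublevel {l} : I l -> sublevel X f l (xl l).
Proof. by case/xl_proj. Qed.

Lemma value_decrease {l l'} : I l -> I l' -> l <= l' ->
  m / 4 * N (xl l - xl l') ^+ 2 <= V l - V l'.
Proof.
move=> Il Il' ll'; have [Xl fl] := proj_sublevel Il.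
apply: (bregman_proj_sq_le hN cvX bregman_ge _ _ (xl_proj _ Il')).
- by move=> z [].
- move=> y z t Ky Kz t01; have := sublevel_convex_comb cvX cvf t01 Ky Kz.
  by rewrite -mulrDl subrK mul1r.
- by split=> //; exact: le_trans ll'.
Qed.

Lemma value_nonincreasing {l l'} : I l -> I l' -> l <= l' -> V l' <= V l.
Proof.
move=> Il Il' ll'; have := value_decrease Il Il' ll'.
have : 0 <= m / 4 * N (xl l - xl l') ^+ 2.
  by rewrite mulr_ge0 ?exprn_ge0 ?(is_norm_ge0 hN) // divr_ge0 // ltW.
lra.
Qed.

Lemma value_convex {l1 l2 t} : I l1 -> I l2 -> I ((1 - t) * l1 + t * l2) -> 0 <= t <= 1 ->
  V ((1 - t) * l1 + t * l2) <= (1 - t) * V l1 + t * V l2.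
Proof.
move=> Il1 Il2 Il t01.
have [[Xl1 _] [Xl2 _]] := (proj_sublevel Il1, proj_sublevel Il2).
apply: le_trans (bregman_convex hN cvX m0 bregman_ge Xl1 Xl2 t01).
apply: (xl_proj _ Il).2.
exact: sublevel_convex_comb cvX cvf t01 (proj_sublevel Il1) (proj_sublevel Il2).
Qed.

Lemma value_right_continuous {l eta} : I l -> 0 < eta ->
  \forall l' \near l, I l' -> l < l' -> V l - eta < V l'.
Proof.
move=> Il eta0; apply: contrapT => noright.
pose S := [set l' | (I l' /\ l < l') /\ V l' <= V l - eta].
have clS : closure S l.
  move=> B nB; apply: contrapT => noSB; apply: noright.
  apply: filterS nB => l' Bl' Il' ll'; rewrite ltNge; apply/negP => Vl'.
  by apply: noSB; exists l'.
pose F := xl @ within S (nbhs l).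
have PF : ProperFilter F by apply: fmap_proper_filter; exact: within_nbhs_proper.
have near_F (A : set 'rV[R]_d) : (\forall l' \near l, S l' -> A (xl l')) -> F A by [].
have S_F (A : set 'rV[R]_d) : (forall l', S l' -> A (xl l')) -> F A.
  by move=> SA; apply: filterS (withinT S (nbhs_filter l)) => l' /SA.
have cD z : X z -> {for z, continuous (fun y => D y)}.
  by move=> Xz; apply: bregman_continuous; exact: cPhi.
have cB : compact (sublevel X (fun y => D y) (V l)).
  apply: bounded_closed_compact; last exact: closed_sublevel.
  exact: (bregman_sublevel_bounded hN m0 bregman_ge _ X0).
have [p [[Xp _] clp]] : sublevel X (fun y => D y) (V l) `&` cluster F !=set0.
  apply: (cB F PF); apply: S_F => l' [[Il' _] Vl'].
  by split; [exact: (proj_sublevel Il').1 | lra].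
have fp : f p <= l.
  apply/ler_addgt0Pr => e e0.
  suff [] : sublevel X f (l + e) p by [].
  apply: closed_cluster (closed_sublevel clX cf) _ _ clp; apply: near_F.
  have : l < l + e by rewrite ltrDl.
  move=> /lt_nbhsl; apply: filterS => l' ll' [[Il' _] _].
  have [Xl' fl'] := proj_sublevel Il'; split=> //; lra.
have Dp : D p <= V l - eta.
  suff [] : sublevel X (fun y => D y) (V l - eta) p by [].
  apply: closed_cluster (closed_sublevel clX cD) _ _ clp; apply: S_F => l' [[Il' _] Vl'].
  by split=> //; exact: (proj_sublevel Il').1.
by have := (xl_proj _ Il).2 p (conj Xp fp); lra.
Qed.

Lemma value_left_continuous {l l1 eta} : I l -> I l1 -> l1 < l -> 0 < eta ->
  \forall l' \near l, I l' -> l' < l -> V l' < V l + eta.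
Proof.
move=> Il Il1 l1l eta0; have l1l0 : 0 < l - l1 by rewrite subr_gt0.
pose K := `|V l1 - V l| + 1; have K0 : 0 < K by rewrite ltr_wpDl.
exists (Num.min (l - l1) (eta * (l - l1) / K)) => /=.
  by rewrite lt_min l1l0 /= !mulr_gt0 ?invr_gt0.
move=> l' /= + Il' l'l; rewrite lt_min ger0_norm ?subr_ge0 ?ltW //.
case/andP => l'l1 l'eta.
pose t := (l - l') / (l - l1).
have t0 : 0 <= t by rewrite divr_ge0 // subr_ge0 ltW.
have t1 : t <= 1 by rewrite /t ler_pdivrMr // mul1r; lra.
have tK : t * K < eta by rewrite /t mulrAC ltr_pdivrMr // -ltr_pdivlMr.
have lt : (1 - t) * l + t * l1 = l' by rewrite /t; field; rewrite gt_eqF.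
have := @value_convex l l1 t Il Il1; rewrite lt => /(_ Il'); rewrite t0 t1 => /(_ isT).
have := ler_wpM2l t0 (ler_norm (V l1 - V l)); rewrite /K in tK; nra.
Qed.

Lemma value_continuous : {within I, continuous (fun l => V l)}.
Proof.
apply/subspace_continuousP => l Il; apply/cvgrPdist_lt => e e0.
rewrite /from_subspace /=.
have near_right := value_right_continuous Il e0.
have near_left : \forall l' \near l, I l' -> l' < l -> V l' < V l + e.
  have [[l1 Il1 l1l]|noleft] := pselect (exists2 l1, I l1 & l1 < l).
    exact: value_left_continuous Il Il1 l1l e0.
  exists 1 => [|l' _ Il' l'l]; first exact: ltr01.
  by exfalso; apply: noleft; exists l'.
move: near_right near_left; apply: filterS2 => l' right left Il'.
case: (ltgtP l l') => [ll'|l'l|<-]; last by rewrite subrr normr0.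
- have := value_nonincreasing Il Il' (ltW ll'); have := right Il' ll'.
  by move=> ? ?; rewrite ger0_norm ?subr_ge0 //; lra.
- have := value_nonincreasing Il' Il (ltW l'l); have := left Il' l'l.
  by move=> ? ?; rewrite ler0_norm ?subr_le0 //; lra.
Qed.

Lemma proj_continuous : {within I, continuous xl}.
Proof.
have [k k0 kN] := is_norm_ge_normr hN.
have value_gap l l' : I l -> I l' -> m / 4 * N (xl l - xl l') ^+ 2 <= `|V l - V l'|.
  move=> Il Il'; have [ll'|l'l] := lerP l l'.
    exact: le_trans (value_decrease Il Il' ll') (ler_norm _).
  rewrite distrC -opprB (is_normN hN).
  exact: le_trans (value_decrease Il' Il (ltW l'l)) (ler_norm _).
apply/subspace_continuousP => l Il; apply/cvgrPdist_lt => e e0.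
have gap0 : 0 < m / 4 * (k * e) ^+ 2 by rewrite !mulr_gt0 ?exprn_gt0 ?mulr_gt0.
have /cvgrPdist_lt /(_ _ gap0) := (subspace_continuousP _ _).1 value_continuous l Il.
apply: filterS2 (withinT I _); rewrite /from_subspace /= => l' Il' Vl'.
rewrite ltNge; apply/negP => el.
have ke : k * e <= N (xl l - xl l') by apply: le_trans (kN _); rewrite ler_pM2l.
have : (k * e) ^+ 2 <= N (xl l - xl l') ^+ 2.
  apply: lerXn2r => //; rewrite nnegrE; last exact: is_norm_ge0.
  by rewrite mulr_ge0 // ltW.
have m4 : 0 <= m / 4 by rewrite divr_ge0 // ltW.
move=> /(ler_wpM2l m4); have := value_gap _ _ Il Il'; lra.
Qed.

End ProjectionPath.

Theorem lemma5 (R : realType) (d : nat) (N : 'rV[R]_d -> R)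
  (X : set 'rV[R]_d) (Phi f : 'rV[R]_d -> R) (gPhi gf : 'rV[R]_d -> 'rV[R]_d)
  (m M : R) (x0 : 'rV[R]_d) (xl : R -> 'rV[R]_d) (I : set R) :
  is_norm N ->
  convex_set_of X -> closed X ->
  C1_on X Phi gPhi -> C1_on X f gf ->
  convex_fun_on X f ->
  0 < m -> m <= M ->
  (forall x y, X x -> X y ->
     m / 2 * N (x - y) ^+ 2 <= bregman Phi gPhi x y <= M / 2 * N (x - y) ^+ 2) ->
  X x0 ->
  (forall l, I l -> is_bregman_proj Phi gPhi (sublevel X f l) x0 (xl l)) ->
  (forall l, I l -> gf (xl l) != 0) ->
  {within I, continuous (fun l =>
     dual_norm N (gPhi x0 - gPhi (xl l)) / dual_norm N (gf (xl l)))}.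
Proof.
(* Only the lower Bregman bound, i.e. strong convexity, is needed. *)
move=> hN cvX clX hPhi hf cvf m0 _ hB X0 xl_proj gf_neq0.
have C1_continuous F gF : C1_on X F gF -> forall z, X z -> {for z, continuous F}.
  by move=> [dF _] z /dF [/differentiable_continuous].
have bregman_ge x y Xx Xy := proj1 (andP (hB x y Xx Xy)).
have xlX l : I l -> X (xl l) by case/xl_proj => -[].
have cxl := proj_continuous hN cvX clX (C1_continuous _ _ hPhi)
  (C1_continuous _ _ hf) cvf m0 bregman_ge X0 xl_proj.
apply/subspace_continuousP => l Il.
have grad_cvg (g : 'rV[R]_d -> 'rV[R]_d) : {within X, continuous g} ->
    (g \o xl) @ within I (nbhs l) --> g (xl l).
  move=> cg; have := within_continuous_comp_within cxl cg xlX.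
  by move=> /subspace_continuousP; apply.
have dual_cvg (g : 'rV[R]_d -> 'rV[R]_d) : (g \o xl) @ within I (nbhs l) --> g (xl l) ->
    (fun l' => dual_norm N (g (xl l'))) @ within I (nbhs l) --> dual_norm N (g (xl l)).
  exact: continuous_cvg (dual_norm_continuous hN _).
apply: cvgM.
  apply: (dual_cvg (fun z => gPhi x0 - gPhi z)).
  exact: cvgB (cvg_cst _) (grad_cvg _ hPhi.2).
apply: cvgV; first by rewrite gt_eqF // dual_norm_gt0 // gf_neq0.
exact: dual_cvg (grad_cvg _ hf.2).
Qed.
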